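(* For $1\le\ell\le r$ let \[ F_\ell(n)=z_\ell^n\prod_{\nu=1}^{m_\ell}P_{\ell,\nu}(n)^{q_{\ell,\nu}}\prod_{j=1}^{h_\ell}\mathcal P_{\Omega_{\ell,j}}(n)^{e_{\ell,j}}, \] with $P_{\ell,\nu}\in\mathbb C[x]$, $z_\ell,q_{\ell,\nu}\in\mathbb C$, $e_{\ell,j}\in\mathbb Z_{\ge0}$ and words $\Omega_{\ell,j}$ in polynomial letters, where the polynomial factors are nonzero on the relevant positive integers and branches for all complex powers are fixed. Then for every positive integer $k$, \[ \sum_{n_r=1}^{k}\sum_{n_{r-1}=1}^{n_r}\cdots\sum_{n_1=1}^{n_2}\prod_{\ell=1}^{r}F_\ell(n_\ell)\in\operatorname{span}_{\mathbb C}\{\mathcal P_\Omega(k)\}_\Omega, \] where $\Omega$ ranges over words in polynomial letters.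
   Context: A polynomial letter is a triple $L=(\boldsymbol\rho,\sigma,\mathbf P)$ with $\boldsymbol\rho=(\rho_1,\ldots,\rho_t)\in\mathbb C^t$, $\sigma\in\mathbb C$, $\mathbf P=(P_1,\ldots,P_t)$, $P_\nu\in\mathbb C[x]$; its value at a positive integer $n$ is $L(n)=\sigma^n\prod_\nu P_\nu(n)^{-\rho_\nu}$ (branches fixed, polynomials nonzero on the relevant range). For a word $\Omega=(L_1,\ldots,L_d)$ of polynomial letters, $\mathcal P_\Omega(N)=\sum_{N\ge n_1>\cdots>n_d\ge1}\prod_jL_j(n_j)$, $\mathcal P_\emptyset(N)=1$. *)

From HB Require Import structures.
From mathcomp Require Import all_boot all_order all_algebra.
From mathcomp Require Import all_classical all_reals all_analysis.
From mathcomp Require Import exp trigo.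
From mathcomp Require Import complex.
From Stdlib Require List.
Set Implicit Arguments. Unset Strict Implicit. Unset Printing Implicit Defensive.
Import Order.TTheory GRing.Theory Num.Theory.
Local Open Scope ring_scope.
Local Open Scope complex_scope.

Section Defs.
Variable R : realType.
Local Notation C := R[i].

Definition expC (z : C) : C :=
  let: Complex a b := z in (expR a)%:C * (cos b +i* sin b).

Definition is_log_branch (Lg : C -> C) : Prop :=
  forall w : C, w != 0 -> expC (Lg w) = w.

Definition cpow (Lg : C -> C) (w q : C) : C := expC (q * Lg w).

(* A polynomial letter L = (rho, sigma, P): stored as sigma together with the
   list of pairs (rho_nu, P_nu), nu = 1..t. *)
Record letter := Letter { lsigma : C ; lfactors : seq (C * {poly C}) }.

Definition letter_val (Lg : C -> C) (L : letter) (n : nat) : C :=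
  lsigma L ^+ n * \prod_(rp <- lfactors L) cpow Lg (rp.2).[n%:R] (- rp.1).

Definition word := seq letter.

(* P_Omega(N) = sum_{N >= n_1 > ... > n_d >= 1} prod_j L_j(n_j), written as the
   nested sum  sum_{n_1=1}^{N} L_1(n_1) * P_{(L_2,...,L_d)}(n_1 - 1);  P_[](N) = 1. *)
Fixpoint PO (Lg : C -> C) (w : word) (N : nat) : C :=
  match w with
  | [::] => 1
  | L :: w' => \sum_(1 <= n < N.+1) letter_val Lg L n * PO Lg w' n.-1
  end.

Definition poly_nz (P : {poly C}) : Prop := forall n : nat, (0 < n)%N -> P.[n%:R] != 0.
Definition letter_adm (L : letter) : Prop :=
  forall rp, List.In rp (lfactors L) -> poly_nz rp.2.
Definition word_adm (w : word) : Prop := forall L, List.In L w -> letter_adm L.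

(* The data of one factor F_l:  z_l, the pairs (q_{l,nu}, P_{l,nu}), and the pairs
   (Omega_{l,j}, e_{l,j}). *)
Record sfactor := Factor {
  fz : C ;
  fpolys : seq (C * {poly C}) ;
  fwords : seq (word * nat) }.

Definition factor_val (Lg : C -> C) (F : sfactor) (n : nat) : C :=
  fz F ^+ n * \prod_(qp <- fpolys F) cpow Lg (qp.2).[n%:R] qp.1
            * \prod_(we <- fwords F) PO Lg we.1 n ^+ we.2.

Definition factor_adm (F : sfactor) : Prop :=
  (forall qp, List.In qp (fpolys F) -> poly_nz qp.2) /\
  (forall we, List.In we (fwords F) -> word_adm we.1).

Fixpoint nested_sum (Gs : seq (nat -> C)) (N : nat) : C :=
  match Gs with
  | [::] => 1
  | G :: Gs' => \sum_(1 <= n < N.+1) G n * nested_sum Gs' n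
  end.

(* sum_{n_r=1}^{k} sum_{n_{r-1}=1}^{n_r} ... sum_{n_1=1}^{n_2} prod_l F_l(n_l),
   for Fs = [:: F_1; ...; F_r] *)
Definition iterated_sum (Lg : C -> C) (Fs : seq sfactor) (k : nat) : C :=
  nested_sum (rev (map (factor_val Lg) Fs)) k.

End Defs.

From HB Require Import structures.
From mathcomp Require Import all_boot all_order all_algebra.
From mathcomp Require Import all_classical all_reals.
From mathcomp Require Import complex.
From mathcomp Require Import ring.
From Stdlib Require List.
Import GRing.Theory Num.Theory.
Local Open Scope ring_scope.

(** The span of the nested sums P_Ω is closed under products: the quasi-shuffle
    (stuffle) identity expands P_{aA}(N) P_{bB}(N) into three nested sums whose
    first letters are a, b and the letter product ab.  It is also closed under
    the linear operators f ↦ Σ_{n≤N} L(n) f(n-1) and f ↦ Σ_{n≤N} L(n) f(n).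
    Each F_ℓ is a letter times a product of P_Ω's, so the iterated sum is built
    from 1 by these operations.  The branch of the logarithm plays no role. *)

Lemma In_rev T (x : T) (s : seq T) : List.In x (rev s) -> List.In x s.
Proof.
have -> : rev s = List.rev s by elim: s => //= y s IH; rewrite rev_cons -cats1 IH.
exact: (List.in_rev s x).2.
Qed.

Section PolynomialLetterSpan.
Variables (R : realType) (Lg : R[i] -> R[i]).
Local Notation C := R[i].
Local Notation PO := (PO Lg).
Local Notation lv := (letter_val Lg).

Definition letter_mul (L M : letter R) : letter R :=
  Letter (lsigma L * lsigma M) (lfactors L ++ lfactors M).

Lemma letter_val_mul (L M : letter R) n : lv (letter_mul L M) n = lv L n * lv M n.
Proof. by rewrite /letter_val /= big_cat /= exprMn; ring. Qed.

Lemma letter_adm_mul {L M : letter R} :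
  letter_adm L -> letter_adm M -> letter_adm (letter_mul L M).
Proof. by move=> admL admM rp /(@List.in_app_or _ (lfactors L)) [/admL|/admM]. Qed.

Lemma word_adm_cons (L : letter R) (w : word R) :
  word_adm (L :: w) <-> letter_adm L /\ word_adm w.
Proof.
split=> [adm_Lw | [admL admw] M [<- //|/admw //]].
by split=> [|M Mw]; apply: adm_Lw; [left | right].
Qed.

Lemma PO_cons L w N : PO (L :: w) N = \sum_(1 <= n < N.+1) lv L n * PO w n.-1.
Proof. by []. Qed.

Lemma PO_consS L w N : PO (L :: w) N.+1 = PO (L :: w) N + lv L N.+1 * PO w N.
Proof. by rewrite !PO_cons big_nat_recr. Qed.

Lemma PO_cons_mul a A b B N :
  PO (a :: A) N * PO (b :: B) N =
    \sum_(1 <= n < N.+1) lv a n * (PO A n.-1 * PO (b :: B) n.-1)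
  + \sum_(1 <= n < N.+1) lv b n * (PO (a :: A) n.-1 * PO B n.-1)
  + \sum_(1 <= n < N.+1) lv (letter_mul a b) n * (PO A n.-1 * PO B n.-1).
Proof.
elim: N => [|N IH]; first by rewrite !PO_cons !big_geq // mulr0 !addr0.
rewrite !PO_consS mulrDl !mulrDr IH !(big_nat_recr N.+1) // letter_val_mul /=.
ring.
Qed.

Lemma sum_mul_PO_cons L b w N :
  \sum_(1 <= n < N.+1) lv L n * PO (b :: w) n =
  PO [:: L, b & w] N + PO (letter_mul L b :: w) N.
Proof.
rewrite PO_cons (PO_cons (letter_mul L b)) -big_split.
apply: eq_big_nat => -[//|n] _.
by rewrite PO_consS letter_val_mul /=; ring.
Qed.

Definition in_PO_span (f : nat -> C) : Prop :=
  exists cws : seq (C * word R),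
    (forall cw, List.In cw cws -> word_adm cw.2) /\
    f =1 (fun N => \sum_(cw <- cws) cw.1 * PO cw.2 N).

Lemma in_PO_span_eq {f g : nat -> C} : f =1 g -> in_PO_span f -> in_PO_span g.
Proof. by move=> fg [cws [adm Ef]]; exists cws; split=> // N; rewrite -fg. Qed.

Lemma in_PO_span0 : in_PO_span (fun _ => 0).
Proof. by exists [::]; split=> // N; rewrite big_nil. Qed.

Lemma in_PO_spanD {f g : nat -> C} :
  in_PO_span f -> in_PO_span g -> in_PO_span (fun N => f N + g N).
Proof.
move=> [cf [admf Ef]] [cg [admg Eg]]; exists (cf ++ cg); split.
  by move=> cw /(@List.in_app_or _ cf) [/admf|/admg].
by move=> N; rewrite big_cat Ef Eg.
Qed.

Lemma in_PO_spanZ c {f : nat -> C} : in_PO_span f -> in_PO_span (fun N => c * f N).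
Proof.
move=> [cws [adm Ef]]; exists [seq (c * cw.1, cw.2) | cw <- cws]; split.
  by move=> cw /List.in_map_iff [cw' [<- /adm]].
by move=> N; rewrite big_map Ef mulr_sumr; apply: eq_bigr => cw _; rewrite mulrA.
Qed.

Lemma in_PO_span_PO {w : word R} : word_adm w -> in_PO_span (PO w).
Proof.
by move=> admw; exists [:: (1, w)]; split=> [cw [<-|[]] //|N]; rewrite big_seq1 mul1r.
Qed.

Lemma in_PO_span1 : in_PO_span (fun _ => 1).
Proof. by apply: (@in_PO_span_PO [::] _) => ? []. Qed.

Lemma in_PO_span_linear (T : (nat -> C) -> nat -> C) :
  (forall f g, f =1 g -> T f =1 T g) ->
  (forall c f g, T (fun N => c * f N + g N) =1 (fun N => c * T f N + T g N)) ->
  (forall w, word_adm w -> in_PO_span (T (PO w))) ->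
  forall f, in_PO_span f -> in_PO_span (T f).
Proof.
move=> T_ext T_lin T_PO f [cws [adm Ef]].
apply: in_PO_span_eq (T_ext _ _ (fsym Ef)) _.
elim: cws adm {Ef} => [_ | [c w] cws IH adm].
  apply: in_PO_span_eq in_PO_span0 => N.
  (* T 0 = 0 is linearity with c = -1. *)
  rewrite (T_ext _ (fun N => -1 * 0 + 0)) => [|M]; last by rewrite big_nil; ring.
  by rewrite T_lin; ring.
have Sw := T_PO w (adm (c, w) (or_introl erefl)).
have Scws := IH (fun cw cws_cw => adm cw (or_intror cws_cw)).
apply: in_PO_span_eq (in_PO_spanD (in_PO_spanZ c Sw) Scws) => N.
rewrite [RHS](T_ext _ (fun M => c * PO w M + \sum_(cw <- cws) cw.1 * PO cw.2 M)).
  by rewrite T_lin.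
by move=> M; rewrite big_cons.
Qed.

Lemma in_PO_span_weighted_sum (G : nat -> C) (s : nat -> nat) :
  (forall w, word_adm w ->
     in_PO_span (fun N => \sum_(1 <= n < N.+1) G n * PO w (s n))) ->
  forall f, in_PO_span f ->
    in_PO_span (fun N => \sum_(1 <= n < N.+1) G n * f (s n)).
Proof.
apply: (in_PO_span_linear (fun f N => \sum_(1 <= n < N.+1) G n * f (s n))).
  by move=> f g fg N; apply: eq_bigr => n _; rewrite fg.
by move=> c f g N; rewrite mulr_sumr -big_split; apply: eq_bigr => n _ /=; ring.
Qed.

Lemma in_PO_span_sum_pred {L : letter R} {f : nat -> C} :
  letter_adm L -> in_PO_span f ->
  in_PO_span (fun N => \sum_(1 <= n < N.+1) lv L n * f n.-1).
Proof.
move=> admL; apply: in_PO_span_weighted_sum => w admw.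
by apply: (@in_PO_span_PO (L :: w)); apply/word_adm_cons.
Qed.

Lemma in_PO_span_sum {L : letter R} {f : nat -> C} :
  letter_adm L -> in_PO_span f ->
  in_PO_span (fun N => \sum_(1 <= n < N.+1) lv L n * f n).
Proof.
move=> admL; apply: (in_PO_span_weighted_sum _ id) => -[|b w] admw.
  by apply: (@in_PO_span_PO [:: L] _) => M [<- // | []].
have [admb admw'] := iffLR (word_adm_cons _ _) admw.
apply: in_PO_span_eq (fun N => esym (sum_mul_PO_cons L b w N)) _.
apply: in_PO_spanD; apply: in_PO_span_PO; apply/word_adm_cons; split=> //.
exact: letter_adm_mul.
Qed.

Lemma in_PO_span_PO_mul A B : word_adm A -> word_adm B ->
  in_PO_span (fun N => PO A N * PO B N).
Proof.
elim: A B => [|a A IHA] B admA admB.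
  by apply: in_PO_span_eq (in_PO_span_PO admB) => N; rewrite mul1r.
have [ada admA'] := iffLR (word_adm_cons _ _) admA.
elim: B admB => [|b B IHB] admB.
  by apply: in_PO_span_eq (in_PO_span_PO admA) => N; rewrite mulr1.
have [adb admB'] := iffLR (word_adm_cons _ _) admB.
apply: in_PO_span_eq (fun N => esym (PO_cons_mul a A b B N)) _.
apply: in_PO_spanD; first apply: in_PO_spanD.
- exact: in_PO_span_sum_pred ada (IHA _ admA' admB).
- exact: in_PO_span_sum_pred adb (IHB admB').
- exact: in_PO_span_sum_pred (letter_adm_mul ada adb) (IHA _ admA' admB').
Qed.

Lemma in_PO_spanM {f g : nat -> C} :
  in_PO_span f -> in_PO_span g -> in_PO_span (fun N => f N * g N).
Proof.
move=> Sf Sg; move: f Sf; apply: (in_PO_span_linear (fun f N => f N * g N)).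
- by move=> f f' ff' N; rewrite /= ff'.
- by move=> c f f' N /=; ring.
move=> w admw; move: g Sg; apply: (in_PO_span_linear (fun g N => PO w N * g N)).
- by move=> g g' gg' N; rewrite /= gg'.
- by move=> c g g' N /=; ring.
- by move=> w' admw'; apply: in_PO_span_PO_mul.
Qed.

Lemma in_PO_spanX {f : nat -> C} e :
  in_PO_span f -> in_PO_span (fun N => f N ^+ e).
Proof.
move=> Sf; elim: e => [|e IH].
  by apply: in_PO_span_eq in_PO_span1 => N; rewrite expr0.
by apply: in_PO_span_eq (in_PO_spanM Sf IH) => N; rewrite exprS.
Qed.

Lemma in_PO_span_prod_PO {ws : seq (word R * nat)} :
  (forall we, List.In we ws -> word_adm we.1) ->
  in_PO_span (fun N => \prod_(we <- ws) PO we.1 N ^+ we.2).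
Proof.
elim: ws => [|[w e] ws IH] adm.
  by apply: in_PO_span_eq in_PO_span1 => N; rewrite big_nil.
have Sw := in_PO_spanX e (in_PO_span_PO (adm (w, e) (or_introl erefl))).
have Sws := IH (fun we ws_we => adm we (or_intror ws_we)).
by apply: in_PO_span_eq (in_PO_spanM Sw Sws) => N; rewrite big_cons.
Qed.

Definition factor_letter (F : sfactor R) : letter R :=
  Letter (fz F) [seq (- qp.1, qp.2) | qp <- fpolys F].

Lemma factor_letter_adm {F : sfactor R} :
  factor_adm F -> letter_adm (factor_letter F).
Proof. by move=> [admP _] rp /List.in_map_iff [qp [<- /admP]]. Qed.

Lemma factor_valE F n :
  factor_val Lg F n =
  lv (factor_letter F) n * \prod_(we <- fwords F) PO we.1 n ^+ we.2.
Proof.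
rewrite /factor_val /letter_val /= big_map.
by congr (_ * _ * _); apply: eq_bigr => qp _; rewrite opprK.
Qed.

Lemma in_PO_span_nested_sum Fs : (forall F, List.In F Fs -> factor_adm F) ->
  in_PO_span (nested_sum (map (factor_val Lg) Fs)).
Proof.
elim: Fs => [|F Fs IH] adm; first exact: in_PO_span1.
have admF := adm F (or_introl erefl).
have admFs G (FsG : List.In G Fs) := adm G (or_intror FsG).
have Sprod := in_PO_span_prod_PO admF.2.
apply: in_PO_span_eq
  (in_PO_span_sum (factor_letter_adm admF) (in_PO_spanM Sprod (IH admFs))).
by move=> N /=; apply: eq_bigr => n _; rewrite factor_valE mulrA.
Qed.

End PolynomialLetterSpan.

Theorem corollary7p5 (R : realType) (Lg : R[i] -> R[i]) (hLg : is_log_branch Lg)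
  (Fs : seq (sfactor R)) (hFs : forall F, List.In F Fs -> factor_adm F) :
  exists cws : seq (R[i] * word R),
    (forall cw, List.In cw cws -> word_adm cw.2) /\
    forall k : nat, (0 < k)%N ->
      iterated_sum Lg Fs k = \sum_(cw <- cws) cw.1 * PO Lg cw.2 k.
Proof.
have [|cws [cws_adm E]] := @in_PO_span_nested_sum R Lg (rev Fs).
  by move=> F revFs_F; apply/hFs/In_rev.
by exists cws; split=> // k _; rewrite /iterated_sum -map_rev E.
Qed.
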